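(* Let $n\ge3$. (1) For any $\mathbf{p}\in\mathbb{Q}^{n!}$, there exists $\widehat{\mathbf{p}}\in\mathbb{N}_0^{n!}$ such that for every $\mathbf{w}\in\overline{W}$, the vectors $Q_{\widehat{\mathbf{p}}}\mathbf{w}$ and $Q_{\mathbf{p}}\mathbf{w}$ lie in the same face. (2) For any $\mathbf{p}\in\mathbb{Q}^{n!}$, there exists $\widetilde{\mathbf{p}}\in\mathbb{Q}^{n!}$ with $\widetilde{p}_\ell\ge 0$ for all $\ell$ and $\sum_{\ell=1}^{n!}\widetilde{p}_\ell=1$ such that for every $\mathbf{w}\in\overline{W}$, the vectors $Q_{\widetilde{\mathbf{p}}}\mathbf{w}$ and $Q_{\mathbf{p}}\mathbf{w}$ lie in the same face.
   Context: Work over $\mathbb{Q}$; $\mathbb{N}_0$ denotes the nonnegative integers. Let $\overline{W}=\{\mathbf{x}\in\mathbb{Q}^n : x_1\ge x_2\ge\cdots\ge x_n,\ x_1+\cdots+x_n=0\}$. Label the permutations of $S_n$ as $\sigma_1,\dots,\sigma_{n!}$ (lexicographically in one-line notation), let $R_\ell$ be the $n\times n$ permutation matrix with $R_\ell(i,j)=1$ iff $\sigma_\ell(j)=i$, and for $\mathbf{p}\in\mathbb{Q}^{n!}$ let $Q_{\mathbf{p}}=\sum_{\ell=1}^{n!}p_\ell R_\ell$. Two vectors $\mathbf{x},\mathbf{y}\in\mathbb{Q}^n$ lie in the same face (of the braid arrangement) iff for all $i,j\in\{1,\dots,n\}$ we have $x_i>x_j\iff y_i>y_j$ and $x_i=x_j\iff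 y_i=y_j$, i.e. they induce the same (possibly non-strict) ranking of the coordinates. *)

From mathcomp Require Import all_boot all_order all_algebra all_fingroup.
Set Implicit Arguments. Unset Strict Implicit. Unset Printing Implicit Defensive.
Import Order.TTheory GRing.Theory Num.Theory.
Local Open Scope ring_scope.

(* Coordinates of Q^(n!) are indexed directly by the permutations of 'S_n
   (the lexicographic labeling sigma_1..sigma_{n!} is just a bijection). *)

Definition Rperm (n : nat) (s : 'S_n) : 'M[rat]_n :=
  \matrix_(i < n, j < n) (if s j == i then 1 else 0).

Definition Qp (n : nat) (p : {ffun 'S_n -> rat}) : 'M[rat]_n :=
  \sum_(s : 'S_n) p s *: Rperm s.

Definition in_Wbar (n : nat) (x : 'cV[rat]_n) : Prop :=
  (forall i j : 'I_n, (i <= j)%N -> x j 0 <= x i 0) /\ \sum_(i < n) x i 0 = 0.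

Definition same_face (n : nat) (x y : 'cV[rat]_n) : Prop :=
  forall i j : 'I_n, (x i 0 > x j 0 <-> y i 0 > y j 0) /\ (x i 0 = x j 0 <-> y i 0 = y j 0).

From mathcomp Require Import all_boot all_order all_algebra all_fingroup.
From mathcomp Require Import ring.
Set Implicit Arguments. Unset Strict Implicit. Unset Printing Implicit Defensive.
Import Order.TTheory GRing.Theory Num.Theory.
Local Open Scope ring_scope.

(* Every permutation matrix sends [w] to a rearrangement of its entries, and
   each coordinate of [w] lands in each position equally often, so
   [(\sum_s R_s) w = 0] whenever the entries of [w] sum to zero.  Hence on
   [Wbar] the map [p |-> Q_p w] turns [p |-> a p + c] into scaling by [a],
   and for [a > 0] scaling does not change the face.  Clearing denominators
   and shifting moves any rational [p] to a natural one this way; adding 1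
   and normalising then gives a probability vector. *)

Lemma sum_perm_eval_const (V : nmodType) n (F : 'I_n -> V) i j :
  \sum_(s : 'S_n) F (s i) = \sum_(s : 'S_n) F (s j).
Proof.
rewrite (reindex_inj (mulgI (tperm i j))) /=.
by apply: eq_bigr => s _; rewrite permM tpermL.
Qed.

Lemma sum_perm_eval (V : nmodType) n (F : 'I_n -> V) i :
  (\sum_(s : 'S_n) F (s i)) *+ n = (\sum_(j < n) F j) *+ n`!.
Proof.
transitivity (\sum_(j < n) \sum_(s : 'S_n) F (s j)).
  transitivity (\sum_(j < n) \sum_(s : 'S_n) F (s i)).
    by rewrite sumr_const card_ord.
  by apply: eq_bigr => j _; exact: sum_perm_eval_const.
rewrite exchange_big /= -card_Sn -sumr_const; apply: eq_bigr => s _.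
by rewrite [RHS](reindex_inj (@perm_inj _ s)).
Qed.

Lemma Rperm_mulmx n (s : 'S_n) (w : 'cV[rat]_n) i :
  (Rperm s *m w) i 0 = w ((s^-1)%g i) 0.
Proof.
rewrite !mxE (bigD1 ((s^-1)%g i)) //= !mxE permKV eqxx mul1r.
rewrite big1 ?addr0 // => j hj; rewrite !mxE.
by rewrite (can2_eq (permK s) (permKV s)) (negbTE hj) mul0r.
Qed.

Lemma sum_Rperm_mulmx n (w : 'cV[rat]_n) :
  \sum_(i < n) w i 0 = 0 -> (\sum_(s : 'S_n) Rperm s) *m w = 0.
Proof.
move=> w_sum0; apply/matrixP => i k; rewrite (ord1 k) mulmx_suml summxE !mxE.
under eq_bigr => s _ do rewrite Rperm_mulmx.
rewrite (reindex_inj invg_inj) /=.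
under eq_bigr => s _ do rewrite invgK.
have := sum_perm_eval (fun j => w j 0) i; rewrite w_sum0 mul0rn => /eqP.
by rewrite mulrn_eq0 gtn_eqF ?(leq_ltn_trans _ (ltn_ord i)) => // /eqP.
Qed.

Lemma Qp_mulmx_affine n (p q : {ffun 'S_n -> rat}) (a c : rat) (w : 'cV[rat]_n) :
  (forall s, q s = a * p s + c) -> \sum_(i < n) w i 0 = 0 ->
  Qp q *m w = a *: (Qp p *m w).
Proof.
move=> hq w_sum0; rewrite /Qp.
rewrite (eq_bigr (fun s => a *: (p s *: Rperm s) + c *: Rperm s)); last first.
  by move=> s _; rewrite hq scalerDl scalerA.
rewrite big_split /= -!scaler_sumr mulmxDl -!scalemxAl sum_Rperm_mulmx //.
by rewrite scaler0 addr0.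
Qed.

Lemma same_face_scale n (a : rat) (x : 'cV[rat]_n) :
  0 < a -> same_face (a *: x) x.
Proof.
move=> a_gt0 i j; rewrite !mxE; split; first by rewrite ltr_pM2l.
by split=> [|->] //; apply: mulfI; rewrite gt_eqF.
Qed.

Lemma same_face_Qp_affine n (p q : {ffun 'S_n -> rat}) (a c : rat) w :
  0 < a -> (forall s, q s = a * p s + c) -> in_Wbar w ->
  same_face (Qp q *m w) (Qp p *m w).
Proof.
move=> a_gt0 hq [_ w_sum0]; rewrite (Qp_mulmx_affine hq w_sum0).
exact: same_face_scale.
Qed.

Lemma common_denominator (I : finType) (p : I -> rat) :
  exists2 d : int, 0 < d & forall i, exists z : int, d%:~R * p i = z%:~R.
Proof.
exists (\prod_i denq (p i)); first by apply: prodr_gt0 => i _; exact: denq_gt0.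
move=> i; exists (numq (p i) * \prod_(j | j != i) denq (p j)).
by rewrite (bigD1 i) //= !intrM numqE; ring.
Qed.

Lemma affine_to_nat (I : finType) (p : I -> rat) :
  exists a c (m : I -> nat), 0 < a /\ forall i, (m i)%:R = a * p i + c.
Proof.
have [d d_gt0 /fin_all_exists[z hz]] := common_denominator p.
pose C := \sum_i `|z i|.
exists d%:~R, C%:~R, (fun i => absz (z i + C)); split; first by rewrite ltr0z.
move=> i; have z_le_C : `|z i| <= C by rewrite /C (bigD1 i) //= lerDl sumr_ge0.
have zC_ge0 : 0 <= z i + C.
  by rewrite -lerBlDr sub0r lerNl (le_trans _ z_le_C) // -normrN ler_norm.
by rewrite -[_%:R]/((absz (z i + C))%:~R) gez0_abs // rmorphD /= hz.
Qed.

Unset Implicit Arguments.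

Theorem proposition3p8 (n : nat) (hn : (3 <= n)%N) :
  (forall p : {ffun 'S_n -> rat},
     exists ph : {ffun 'S_n -> nat},
       forall w : 'cV[rat]_n, in_Wbar w ->
         same_face (Qp [ffun s => (ph s)%:R] *m w) (Qp p *m w)) /\
  (forall p : {ffun 'S_n -> rat},
     exists pt : {ffun 'S_n -> rat},
       (forall s, 0 <= pt s) /\ \sum_(s : 'S_n) pt s = 1 /\
       forall w : 'cV[rat]_n, in_Wbar w ->
         same_face (Qp pt *m w) (Qp p *m w)).
Proof.
split=> p; have [a [c [m [a_gt0 hm]]]] := affine_to_nat p.
  exists [ffun s => m s] => w; apply: same_face_Qp_affine a_gt0 _ => s.
  by rewrite !ffunE.
pose S := \sum_(s : 'S_n) ((m s).+1%:R : rat).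
have S_gt0 : 0 < S.
  by rewrite /S (bigD1 1%g) //= ltr_pwDl ?ltr0Sn ?sumr_ge0.
exists [ffun s => (m s).+1%:R / S]; split; [|split].
- by move=> s; rewrite ffunE divr_ge0 ?ltW.
- under eq_bigr => s _ do rewrite ffunE.
  by rewrite -mulr_suml divff ?gt_eqF.
- move=> w; apply: (same_face_Qp_affine (a := a / S) (c := (c + 1) / S)).
    by rewrite divr_gt0.
  by move=> s; rewrite ffunE -natr1 hm; ring.
Qed.
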